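(* Let $\varphi:[1,\infty]\to[1,\infty]$ be an admissible function, with constants $\gamma,\beta>0$ as in the definition below. Then for every $x\in\mathbb R$ and every $1\le q_0<\infty$, $$ \inf_{q\in[q_0,\infty)}\varphi(q)e^{-\frac{x}{q}}\le \begin{cases} \varphi(q_0)e^{-\frac{x}{q_0}}, & \text{if } x\ge 0,\\[2pt] q_0^{\beta}e^{\frac{1}{q_0}}\varphi(1-x), & \text{if } x<0. \end{cases} $$
   Context: A function $\varphi:[1,\infty]\to[1,\infty]$ is called admissible if (a) $\varphi(1)=1$ and $\varphi$ is log-concave, i.e. $\theta\log\varphi(x)+(1-\theta)\log\varphi(y)\le\log\varphi(\theta x+(1-\theta)y)$ for all $x,y\ge1$, $0\le\theta\le1$; and (b) there exist $\gamma,\beta>0$ such that for every $x\ge1$, $\frac{\gamma}{x}\le\frac{\varphi'(x)}{\varphi(x)}\le\frac{\beta}{x}$. *)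

From Stdlib Require Import Reals.
From Coquelicot Require Import Coquelicot.
Open Scope R_scope.

Definition log_concave_on_1oo (phi : R -> R) : Prop :=
  forall x y theta, 1 <= x -> 1 <= y -> 0 <= theta <= 1 ->
    theta * ln (phi x) + (1 - theta) * ln (phi y)
      <= ln (phi (theta * x + (1 - theta) * y)).

Definition derivative_on_1oo (phi phi' : R -> R) : Prop :=
  (forall x, 1 < x -> is_derive phi x (phi' x)) /\
  filterlim (fun h => (phi (1 + h) - phi 1) / h) (at_right 0) (locally (phi' 1)).

Definition admissible_with (phi : R -> R) (gamma beta : R) : Prop :=
  (forall x, 1 <= x -> 1 <= phi x) /\
  phi 1 = 1 /\
  log_concave_on_1oo phi /\
  0 < gamma /\ 0 < beta /\
  exists phi' : R -> R, derivative_on_1oo phi phi' /\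
    forall x, 1 <= x -> gamma / x <= phi' x / phi x <= beta / x.

Definition inf_tail (phi : R -> R) (x q0 : R) : Rbar :=
  Glb_Rbar (fun y => exists q, q0 <= q /\ y = phi q * exp (- x / q)).

(** For [x >= 0] the point [q0] itself is a competitor.  For [x < 0] take
    [q = q0 (1 - x)]: the upper bound [phi'/phi <= beta/t] makes
    [ln phi t - beta ln t] nonincreasing, so [phi (q0 y) <= q0^beta phi y]
    with [y = 1 - x], while [-x/q <= 1/q0] bounds the exponential factor. *)

From Stdlib Require Import Reals Lra.
From Coquelicot Require Import Coquelicot.
Open Scope R_scope.

Lemma exp_le_compat (a b : R) : a <= b -> exp a <= exp b.
Proof.
  intros [lt_ab | ->]; [left; exact (exp_increasing _ _ lt_ab) | right; reflexivity].
Qed.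

Lemma is_derive_ln_comp (f : R -> R) (x df : R) :
  0 < f x -> is_derive f x df -> is_derive (fun t => ln (f t)) x (df / f x).
Proof.
  intros fx_pos f_derive.
  replace (df / f x) with (scal df (/ f x)) by (cbv [scal]; simpl; cbv [mult]; simpl; field; lra).
  exact (is_derive_comp ln f x _ _ (is_derive_ln _ fx_pos) f_derive).
Qed.

Lemma nonincreasing_of_derive_nonpos (g g' : R -> R) (a : R) :
  (forall t, a < t -> is_derive g t (g' t)) ->
  (forall t, a < t -> g' t <= 0) ->
  forall y z, a < y -> y <= z -> g z <= g y.
Proof.
  intros g_derive g'_nonpos y z lt_ay le_yz.
  destruct (MVT_gen g y z g') as (c & c_in & mvt);
    rewrite Rmin_left, Rmax_right in * by lra.
  - intros t t_in; apply g_derive; lra.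
  - intros t t_in; apply continuity_pt_filterlim, (ex_derive_continuous (V := R_NormedModule)).
    exists (g' t); apply g_derive; lra.
  - assert (g' c * (z - y) <= 0) by (apply Rmult_le_0_r; [apply g'_nonpos | ]; lra).
    lra.
Qed.

Section PolynomialGrowth.

Variables (phi phi' : R -> R) (beta : R).
Hypothesis phi_pos : forall t, 1 < t -> 0 < phi t.
Hypothesis phi_derive : forall t, 1 < t -> is_derive phi t (phi' t).
Hypothesis log_derive_le : forall t, 1 < t -> phi' t / phi t <= beta / t.

Lemma ln_phi_sub_beta_ln_nonincreasing (y z : R) :
  1 < y -> y <= z -> ln (phi z) - beta * ln z <= ln (phi y) - beta * ln y.
Proof.
  apply (nonincreasing_of_derive_nonpos (fun t => ln (phi t) - beta * ln t)
           (fun t => phi' t / phi t - beta / t) 1).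
  - intros t lt_1t.
    replace (beta / t) with (beta * / t) by (unfold Rdiv; ring).
    apply (is_derive_minus (fun t => ln (phi t)) (fun t => beta * ln t)).
    + exact (is_derive_ln_comp _ _ _ (phi_pos t lt_1t) (phi_derive t lt_1t)).
    + apply is_derive_scal, is_derive_ln; lra.
  - intros t lt_1t; specialize (log_derive_le t lt_1t); lra.
Qed.

Lemma phi_scale_le (c y : R) :
  1 <= c -> 1 < y -> phi (c * y) <= Rpower c beta * phi y.
Proof.
  intros le_1c lt_1y.
  pose proof (ln_phi_sub_beta_ln_nonincreasing y (c * y) lt_1y ltac:(nra)) as mono.
  rewrite ln_mult in mono by lra.
  rewrite <- (exp_ln (phi (c * y))) by (apply phi_pos; nra).
  rewrite <- (exp_ln (phi y)) by (apply phi_pos; lra).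
  unfold Rpower; rewrite <- exp_plus.
  apply exp_le_compat; lra.
Qed.

End PolynomialGrowth.

Lemma inf_tail_le (phi : R -> R) (x q0 q : R) :
  q0 <= q -> Rbar_le (inf_tail phi x q0) (phi q * exp (- x / q)).
Proof.
  intros le_q0q.
  apply (Glb_Rbar_correct (fun v => exists q, q0 <= q /\ v = phi q * exp (- x / q))).
  exists q; split; [exact le_q0q | reflexivity].
Qed.

Theorem mainTheorem1 (phi : R -> R) (gamma beta : R) :
  admissible_with phi gamma beta ->
  forall x q0 : R, 1 <= q0 ->
    Rbar_le (inf_tail phi x q0)
      (Finite (if Rle_dec 0 x
               then phi q0 * exp (- x / q0)
               else Rpower q0 beta * exp (1 / q0) * phi (1 - x))).
Proof.
  intros (phi_ge1 & _ & _ & _ & _ & phi' & (phi_derive & _) & log_derive_bounds) x q0 le_1q0.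
  destruct (Rle_dec 0 x) as [x_nonneg | x_neg].
  { apply inf_tail_le; lra. }
  set (y := 1 - x).
  assert (lt_1y : 1 < y) by (unfold y; lra).
  eapply Rbar_le_trans; [apply (inf_tail_le _ _ _ (q0 * y)); nra | simpl].
  assert (phi_pos : forall t, 1 < t -> 0 < phi t) by (intros t ?; specialize (phi_ge1 t); lra).
  pose proof (phi_scale_le phi phi' beta phi_pos phi_derive
    (fun t lt_1t => proj2 (log_derive_bounds t ltac:(lra))) q0 y le_1q0 lt_1y) as growth.
  assert (decay : exp (- x / (q0 * y)) <= exp (1 / q0)).
  { apply exp_le_compat; unfold y.
    replace (1 / q0) with ((1 - x) / (q0 * (1 - x))) by (field; lra).
    apply Rmult_le_compat_r; [left; apply Rinv_0_lt_compat; nra | lra]. }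
  pose proof (phi_pos y lt_1y).
  pose proof (exp_pos (- x / (q0 * y))).
  assert (0 < Rpower q0 beta) by apply exp_pos.
  apply Rle_trans with (Rpower q0 beta * phi y * exp (- x / (q0 * y))).
  - apply Rmult_le_compat_r; lra.
  - replace (Rpower q0 beta * exp (1 / q0) * phi y)
      with (Rpower q0 beta * phi y * exp (1 / q0)) by ring.
    apply Rmult_le_compat_l; [nra | exact decay].
Qed.
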